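(* If $\mathbf M\in\mathcal M_1$ and $\mathbf F(\mathbf s)\neq\mathbf M\mathbf s$, then $F_i(n;\mathbf s)\to1$ as $n\to\infty$, uniformly in $i\in\mathbb N$ and $\mathbf s\in(0,1]^{\mathbb N}$.
   Context: A GWBP/$\infty$ has types $\mathbb N=\{1,2,\dots\}$. Each particle lives one unit of time; a type-$i$ particle produces, independently of everything else, a random vector $\mathbf Z_i=(Z_{ij})_{j\in\mathbb N}$ of children, with $Z_i:=\sum_jZ_{ij}<\infty$ a.s. $\mathbf Z_i(n)=(Z_{ij}(n))_j$ is the generation-$n$ population from one type-$i$ particle. $F_i(n;\mathbf s)=\mathbb E\prod_js_j^{Z_{ij}(n)}$, $F_i(\mathbf s)=F_i(1;\mathbf s)$; ''$\mathbf F(\mathbf s)\neq\mathbf M\mathbf s$'' means it is not true that $F_i(\mathbf s)=\sum_jM_{ij}s_j$ for all $i,\mathbf s$. Mean matrix $\mathbf M=(M_{ij})$, $M_{ij}=\mathbb EZ_{ij}$, $M^{(n)}_{ij}=\mathbb EZ_{ij}(n)$, $M_i=\sum_jM_{ij}$. Irreducible: for all $i,j$ some $M^{(n)}_{ij}>0$; aperiodic: gcd of such $n$ is 1; then $\lim_n(M^{(n)}_{ij})^{1/n}=1/R$ for a common $R$. $\mathbf M\in\mathcal M_1$ means: (i) irreducible, aperiodic, $R=1$, 1-recurrent ($\sum_nM^{(n)}_{ij}=\infty$) and 1-positive ($\lim_nM^{(n)}_{ij}>0$ for all $i,j$); then there are positive eigenvectors $\mathbf v\mathbf M=\mathbf v$,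 $\mathbf M\mathbf u^T=\mathbf u^T$, unique up to positive multiples, normalized with $\sum_jv_ju_j=1$; (ii) $\sum_jv_j=1$ and $\sup_iu_i<\infty$; (iii) $\lim_{N\to\infty}\sup_iM_i^{-1}\sum_{j>N}M_{ij}=0$ and $\lim_{K\to\infty}\sup_iM_i^{-1}\mathbb E[Z_i;Z_i>K]=0$. *)

From HB Require Import structures.
From mathcomp Require Import all_boot all_order all_algebra.
From mathcomp Require Import all_classical all_reals all_analysis.
Set Implicit Arguments. Unset Strict Implicit. Unset Printing Implicit Defensive.
Import Order.TTheory GRing.Theory Num.Theory numFieldNormedType.Exports.
Local Open Scope classical_set_scope.
Local Open Scope ring_scope.

(* Types are indexed by nat = {0,1,2,...} (relabelling of {1,2,...}).
   An offspring vector is z : nat -> nat (z j = number of type-j children).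
   The offspring law of the process is p : nat -> (nat -> nat) -> R,
   p i z = P(Z_i = z). *)

Section GWBP.
Variable R : realType.

(* p is a family of probability mass functions on offspring vectors,
   concentrated on vectors with finitely many children (Z_i < oo a.s.). *)
Definition offspring_law (p : nat -> (nat -> nat) -> R) : Prop :=
  [/\ (forall i z, 0 <= p i z),
      (forall i z, p i z != 0 -> finite_set [set j | z j != 0%N]) &
      (forall i, (\esum_(z in [set: nat -> nat]) (p i z)%:E = 1)%E)].

(* prod_j s_j ^ z_j  (the partial products are eventually constant when z
   has finite support) *)
Definition mono (s : nat -> R) (z : nat -> nat) : R :=
  limn (fun N : nat => (\prod_(j < N) s j ^+ z j : R)).

Definition Fgen (p : nat -> (nat -> nat) -> R) (s : nat -> R) (i : nat) : R :=
  fine (\esum_(z in [set: nat -> nat]) (p i z * mono s z)%:E)%E.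

Definition Fiter (p : nat -> (nat -> nat) -> R) (n : nat) (s : nat -> R)
  : nat -> R := iter n (Fgen p) s.

Definition total (z : nat -> nat) : \bar R :=
  (\esum_(j in [set: nat]) (z j)%:R%:E)%E.

Definition Mmean (p : nat -> (nat -> nat) -> R) (i j : nat) : \bar R :=
  (\esum_(z in [set: nat -> nat]) (p i z)%:E * (z j)%:R%:E)%E.

Definition Mrow (p : nat -> (nat -> nat) -> R) (i : nat) : \bar R :=
  (\esum_(j in [set: nat]) Mmean p i j)%E.

Fixpoint Mpow (p : nat -> (nat -> nat) -> R) (n : nat) (i j : nat) : \bar R :=
  match n with
  | 0%N => ((i == j)%:R)%:E
  | n'.+1 => (\esum_(k in [set: nat]) Mpow p n' i k * Mmean p k j)%E
  end.

Definition trunc_mean (p : nat -> (nat -> nat) -> R) (i K : nat) : \bar R :=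
  (\esum_(z in [set z | K%:R%:E < total z]) (p i z)%:E * total z)%E.

Definition irreducible (p : nat -> (nat -> nat) -> R) : Prop :=
  forall i j, exists n, (0 < n)%N /\ (0 < Mpow p n i j)%E.

Definition aperiodic (p : nat -> (nat -> nat) -> R) : Prop :=
  forall i d, (forall n, (0 < n)%N -> (0 < Mpow p n i i)%E -> (d %| n)%N) ->
    d = 1%N.

(* lim_n (M^(n)_ij)^(1/n) = 1/R with R = 1 *)
Definition radius_one (p : nat -> (nat -> nat) -> R) : Prop :=
  forall i j,
    (\forall n \near \oo, (Mpow p n i j < +oo)%E) /\
    ((fun n : nat => fine (Mpow p n i j) `^ (n%:R)^-1) @ \oo --> (1 : R)).

Definition one_recurrent (p : nat -> (nat -> nat) -> R) : Prop :=
  forall i j, (\esum_(n in [set: nat]) Mpow p n i j = +oo)%E.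

Definition one_positive (p : nat -> (nat -> nat) -> R) : Prop :=
  forall i j, exists l : \bar R,
    (0 < l)%E /\ ((fun n => Mpow p n i j) @ \oo --> l).

Definition class_M1 (p : nat -> (nat -> nat) -> R) : Prop :=
  (forall i, (Mrow p i < +oo)%E) /\
  [/\ irreducible p, aperiodic p, radius_one p, one_recurrent p
    & one_positive p] /\
  (exists v u : nat -> R,
     [/\ (forall j, 0 < v j), (forall i, 0 < u i),
         (forall j, (\esum_(i in [set: nat]) (v i)%:E * Mmean p i j)%E = (v j)%:E),
         (forall i, (\esum_(j in [set: nat]) Mmean p i j * (u j)%:E)%E = (u i)%:E)
       & [/\ (\esum_(j in [set: nat]) (v j * u j)%:E = 1)%E,
             (\esum_(j in [set: nat]) (v j)%:E = 1)%E
           & exists B : R, forall i, u i <= B]]) /\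
  (forall eps : R, 0 < eps -> exists N0 : nat, forall N, (N0 <= N)%N ->
     forall i, (\esum_(j in [set j | (N < j)%N]) Mmean p i j <= eps%:E * Mrow p i)%E) /\
  (forall eps : R, 0 < eps -> exists K0 : nat, forall K, (K0 <= K)%N ->
     forall i, (trunc_mean p i K <= eps%:E * Mrow p i)%E).

Definition F_linear (p : nat -> (nat -> nat) -> R) : Prop :=
  forall s : nat -> R, (forall j, 0 <= s j <= 1) ->
    forall i, (Fgen p s i)%:E = (\esum_(j in [set: nat]) Mmean p i j * (s j)%:E)%E.

End GWBP.

From HB Require Import structures.
From mathcomp Require Import all_boot all_order all_algebra.
From mathcomp Require Import all_classical all_reals all_analysis.
From mathcomp Require Import lra ring.
Import Order.TTheory GRing.Theory Num.Theory numFieldNormedType.Exports.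
Set Implicit Arguments. Unset Strict Implicit. Unset Printing Implicit Defensive.
Local Open Scope ring_scope.

(* Let q_n(j) = 1 - F_j(n; 0) ([surv n j]), the probability that a type-j
   ancestor has descendants in generation n. Then 1 - F_i(n; s) <= q_n(i),
   q_n decreases in n, and 1 - prod_j s_j^z_j <= sum_j z_j (1 - s_j) gives
   q_(n+1) <= M q_n, with a defect of at least (1 - s_j)(1 - s_k) when z has a
   child of type j and another one of type k.
   If some type can have two children, pairing with the left eigenvector v
   turns these defects into sum_n q_n(j) q_n(k) < oo, so q_n(j) or q_n(k)
   tends to 0. Otherwise F(s) = 1 - M (1 - s) exactly, and v M = v,
   sum_j v_j = 1 force M_i = 1 for all i, i.e. F(s) = M s, which is excluded.
   By irreducibility q_n(j) -> 0 for every j. The bounded right eigenvector u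
   and the tail condition bound sup_i M_i, so that
   q_(n+1)(i) <= sum_(j <= N) M_ij q_n(j) + sum_(j > N) M_ij
   is small uniformly in i. *)

Lemma big_ord_bounded_support (T : Type) (idx : T) {op : Monoid.law idx}
    (F : nat -> T) N M :
  (N <= M)%N -> (forall j, (N <= j)%N -> F j = idx) ->
  \big[op/idx]_(j < M) F j = \big[op/idx]_(j < N) F j.
Proof.
move=> NM FN; rewrite -!(big_mkord xpredT) (big_cat_nat (leq0n N) NM) /=.
rewrite [X in op _ X]big1_seq ?Monoid.mulm1 // => j /andP[_].
by rewrite mem_iota => /andP[/FN].
Qed.

Definition support_lt (z : nat -> nat) N := forall j, (N <= j)%N -> z j = 0%N.

Lemma support_lt_gt0 z N j : support_lt z N -> (0 < z j)%N -> (j < N)%N.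
Proof. by move=> zN; apply: contraTT; rewrite -leqNgt => /zN ->. Qed.

Lemma finite_support_bound (z : nat -> nat) :
  finite_set [set j | z j != 0%N] -> exists N, support_lt z N.
Proof.
move=> fin_z; exists (\max_(j <- finmap.enum_fset (fset_set [set j | z j != 0%N])) j).+1.
move=> j; apply: contraTeq => zj; rewrite -ltnNge ltnS.
by apply: (@leq_bigmax_seq _ _ xpredT id) => //; rewrite in_fset_set // inE.
Qed.

Section ExtendedSums.
Local Open Scope classical_set_scope.
Local Open Scope ereal_scope.
Variable R : realType.

Lemma esumZl (T : choiceType) (I : set T) (c : R) (a : T -> \bar R) :
  (0 <= c)%R -> (forall i, 0 <= a i) ->
  \esum_(i in I) (c%:E * a i) = c%:E * \esum_(i in I) a i.
Proof.
suff le_esumZl (d : R) (b : T -> \bar R) : (0 <= d)%R -> (forall i, 0 <= b i) ->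
    \esum_(i in I) (d%:E * b i) <= d%:E * \esum_(i in I) b i.
  move=> c0 a0; have [->|c_neq0] := eqVneq c 0%R.
    by rewrite mul0e esum1 // => i _; rewrite mul0e.
  apply/eqP; rewrite eq_le le_esumZl //=.
  have cV0 : (0 <= c^-1)%R by rewrite invr_ge0.
  have ca0 i : 0 <= c%:E * a i by rewrite mule_ge0 // lee_fin.
  have c0E : 0 <= c%:E by rewrite lee_fin.
  have := lee_wpmul2l c0E (le_esumZl _ _ cV0 ca0).
  rewrite muleA -EFinM mulfV // mul1e; apply: le_trans; apply: lee_wpmul2l => //.
  by apply: le_esum => i _; rewrite muleA -EFinM mulVf // mul1e.
move=> d0 b0; apply: ge_ereal_sup => _ [X [finX XI] <-] /=.
rewrite -ge0_mule_fsumr //; apply: lee_wpmul2l; first by rewrite lee_fin.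
by apply: ereal_sup_ubound; exists X.
Qed.

Lemma esumZr (T : choiceType) (I : set T) (c : R) (a : T -> \bar R) :
  (0 <= c)%R -> (forall i, 0 <= a i) ->
  \esum_(i in I) (a i * c%:E) = (\esum_(i in I) a i) * c%:E.
Proof.
move=> c0 a0; rewrite [RHS]muleC -esumZl //.
by apply: eq_esum => i _; exact: muleC.
Qed.

Lemma esum_interchange (T1 T2 : choiceType) (a : T1 -> T2 -> \bar R) :
  (forall i j, 0 <= a i j) ->
  \esum_(i in [set: T1]) \esum_(j in [set: T2]) a i j =
  \esum_(j in [set: T2]) \esum_(i in [set: T1]) a i j.
Proof.
move=> a0; rewrite !(@esum_esum _ _ _ _ (fun=> setT)) //.
rewrite (reindex_esum (setT `*`` (fun=> setT)) _ (fun x => (x.2, x.1))) //.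
split=> //= [[i1 i2] [j1 j2] _ _ [-> ->] //|[i1 i2] _].
by exists (i2, i1).
Qed.

Lemma le_term_esum (T : choiceType) (I : set T) (a : T -> \bar R) t :
  I t -> (forall i, I i -> 0 <= a i) -> a t <= \esum_(i in I) a i.
Proof.
move=> It a0; apply: esum_ge; exists [set t]; last by rewrite fsbig_set1.
by split; [exact: finite_set1 | move=> ? ->].
Qed.

Lemma le_esum_subset (T : choiceType) (I J : set T) (a : T -> \bar R) :
  I `<=` J -> \esum_(i in I) a i <= \esum_(i in J) a i.
Proof.
move=> IJ; apply: ge_ereal_sup => _ [X [finX XI] <-] /=.
by apply: ereal_sup_ubound; exists X => //; split => //; exact: subset_trans XI IJ.
Qed.

Lemma esum_gt0_witness (T : choiceType) (I : set T) (a : T -> \bar R) :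
  0 < \esum_(i in I) a i -> exists2 i, I i & a i != 0.
Proof.
apply: contraPP => /forall2NP no_witness; rewrite esum1 ?ltxx // => i Ii.
by have [//|/negP/negbNE/eqP] := no_witness i.
Qed.

Lemma esum_nat_bounded_support (f : nat -> R) N :
  (forall j, (0 <= f j)%R) -> (forall j, (N <= j)%N -> f j = 0%R) ->
  \esum_(j in [set: nat]) (f j)%:E = (\sum_(j < N) f j)%:E.
Proof.
move=> f0 fN; rewrite -nneseries_esumT; last by move=> n; rewrite lee_fin.
apply: lim_near_cst; first exact: ereal_hausdorff.
exists N => // n /= Nn.
rewrite -sumEFin big_mkord (big_ord_bounded_support (F := fun j => (f j)%:E) Nn) //.
by move=> j /fN ->.
Qed.

End ExtendedSums.

Lemma bernoulli_gap (R : realFieldType) (t : R) k : 0 <= t <= 1 ->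
  k.-1%:R * (1 - t) ^+ 2 <= k%:R * (1 - t) - (1 - t ^+ k).
Proof.
case/andP=> t0 t1; elim: k => [|[|k] IH]; first by rewrite mul0r expr0 mul0r subrr subr0.
  by rewrite mul0r expr1 mul1r subrr.
have : 0 <= (1 - t) * (t - t ^+ k.+1) by rewrite mulr_ge0 ?subr_ge0 ?ler_iXnr.
rewrite /= -[k.+2%:R]natr1 -[k.+1%:R]natr1 [t ^+ k.+2]exprSr expr2 in IH *; nra.
Qed.

Lemma telescoping_bound (R : realFieldType) (a b : nat -> R) :
  (forall n, 0 <= a n) -> (forall n, a n.+1 + b n <= a n) ->
  (forall m n, (m <= n)%N -> b n <= b m) -> forall N, N%:R * b N <= a 0%N.
Proof.
move=> a0 step b_nonincr N.
have partial_sums M : a M + \sum_(n < M) b n <= a 0%N.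
  elim: M => [|M IH]; first by rewrite big_ord0 addr0.
  by rewrite big_ord_recr /=; have := step M; lra.
have : \sum_(n < N) b N <= \sum_(n < N) b n.
  by apply: ler_sum => n _; apply: b_nonincr; exact: ltnW.
rewrite sumr_const card_ord -mulr_natl; have := partial_sums N; have := a0 N; lra.
Qed.

Lemma small_factor_of_linear_bound (R : archiRealFieldType) (x y : nat -> R) (K d : R) :
  0 < d -> (forall n, d <= x n) -> (forall n, 0 <= y n) ->
  (forall N, N%:R * (x N * y N) <= K) -> forall e : R, 0 < e -> exists N, y N < e.
Proof.
move=> d0 dx y0 bound e e0; have de0 : 0 < d * e by rewrite mulr_gt0.
have K0 : 0 <= K by apply: le_trans (bound 0%N); rewrite mul0r.
have := archi_boundP (divr_ge0 K0 (ltW de0)); set N := Num.bound _ => KN.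
exists N; rewrite ltNge; apply/negP => ey.
have : N%:R * (d * e) <= N%:R * (x N * y N).
  by apply: ler_wpM2l; [exact: ler0n | exact: ler_pM (ltW d0) (ltW e0) (dx N) ey].
move: KN; rewrite ltr_pdivrMr // => KN; have := bound N; lra.
Qed.

Lemma prefix_min_gt0 (R : realDomainType) (f : nat -> R) N :
  (forall j, 0 < f j) -> exists2 mu, 0 < mu & forall j, (j <= N)%N -> mu <= f j.
Proof.
move=> f_gt0; elim: N => [|N [mu mu0 mu_le]].
  by exists (f 0%N) => // j; rewrite leqn0 => /eqP ->.
exists (Order.min mu (f N.+1)) => [|j]; first by rewrite lt_min mu0 f_gt0.
rewrite leq_eqVlt ltnS => /orP[/eqP ->|/mu_le]; first by rewrite ge_min lexx orbT.
by move=> le_mu; rewrite ge_min le_mu.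
Qed.

Definition two_kids (z : nat -> nat) j k :=
  if j == k then (1 < z j)%N else (0 < z j)%N && (0 < z k)%N.

Lemma two_kidsC z j k : two_kids z j k = two_kids z k j.
Proof. by rewrite /two_kids eq_sym; case: eqP => [->|]; rewrite // andbC. Qed.

Lemma two_kids_gt0 {z j k} : two_kids z j k -> (0 < z j)%N /\ (0 < z k)%N.
Proof.
rewrite /two_kids; case: eqP => [-> lt1z|_ /andP[] //].
by split; exact: ltnW.
Qed.

Section TruncatedProducts.
Variables (R : realFieldType) (s : nat -> R).

Definition mono_trunc N (z : nat -> nat) := \prod_(j < N) s j ^+ z j.
Definition lin_trunc N (z : nat -> nat) := \sum_(j < N) (z j)%:R * (1 - s j).
Definition defect_trunc N (z : nat -> nat) := lin_trunc N z - (1 - mono_trunc N z).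

Lemma defect_truncS N z : defect_trunc N.+1 z = defect_trunc N z +
  ((z N)%:R * (1 - s N) - (1 - s N ^+ z N)) + (1 - mono_trunc N z) * (1 - s N ^+ z N).
Proof. by rewrite /defect_trunc /lin_trunc /mono_trunc !big_ord_recr /=; ring. Qed.

Lemma defect_trunc0 z : defect_trunc 0 z = 0.
Proof. by rewrite /defect_trunc /lin_trunc /mono_trunc !big_ord0 subrr subr0. Qed.

Hypothesis s01 : forall j, 0 <= s j <= 1.

Lemma expr_s01 j k : 0 <= s j ^+ k <= 1.
Proof. by have /andP[s0 s1] := s01 j; rewrite exprn_ge0 // exprn_ile1. Qed.

Lemma mono_trunc01 N z : 0 <= mono_trunc N z <= 1.
Proof.
rewrite prodr_ge0 ?prodr_ile1 // => j _; first exact: expr_s01.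
by case/andP: (expr_s01 j (z j)).
Qed.

Lemma defect_trunc_le_succ N z : defect_trunc N z <= defect_trunc N.+1 z.
Proof.
have /andP[_ P1] := mono_trunc01 N z; have /andP[_ A1] := expr_s01 N (z N).
have := bernoulli_gap (z N) (s01 N); rewrite defect_truncS.
have : 0 <= (1 - mono_trunc N z) * (1 - s N ^+ z N) by rewrite mulr_ge0 ?subr_ge0.
have : 0 <= (z N).-1%:R * (1 - s N) ^+ 2 by rewrite mulr_ge0 ?sqr_ge0.
lra.
Qed.

Lemma defect_trunc_ge0 N z : 0 <= defect_trunc N z.
Proof.
elim: N => [|N IH]; first by rewrite defect_trunc0.
exact: le_trans IH (defect_trunc_le_succ N z).
Qed.

Lemma mono_trunc_le m N z : (m < N)%N -> (0 < z m)%N -> mono_trunc N z <= s m.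
Proof.
move=> mN zm; rewrite /mono_trunc (bigD1 (Ordinal mN)) //=.
have /andP[s0 s1] := s01 m.
apply: le_trans (ler_iXnr zm s0 s1); rewrite ler_piMr ?exprn_ge0 // prodr_ile1 // => j _.
exact: expr_s01.
Qed.

Lemma defect_trunc_two_kids N z j k : (j < N)%N -> (k < N)%N -> two_kids z j k ->
  (1 - s j) * (1 - s k) <= defect_trunc N z.
Proof.
wlog jk : j k / (j <= k)%N => [hwlog|].
  case/orP: (leq_total j k) => [/hwlog//|kj jN kN].
  by rewrite mulrC two_kidsC; apply: hwlog.
elim: N => // N IH jN; rewrite ltnS leq_eqVlt => /orP[/eqP kN tk|kN tk]; last first.
  exact: le_trans (IH (leq_ltn_trans jk kN) kN tk) (defect_trunc_le_succ N z).
have [zj zk] := two_kids_gt0 tk; subst k.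
have /andP[P0 P1] := mono_trunc01 N z; have /andP[A0 A1] := expr_s01 N (z N).
have /andP[sN0 sN1] := s01 N; have /andP[sj0 sj1] := s01 j.
have gap := bernoulli_gap (z N) (s01 N).
have gap0 : 0 <= (z N).-1%:R * (1 - s N) ^+ 2 by rewrite mulr_ge0 ?sqr_ge0.
have tail0 : 0 <= (1 - mono_trunc N z) * (1 - s N ^+ z N) by rewrite mulr_ge0 ?subr_ge0.
have D0 := defect_trunc_ge0 N z.
rewrite defect_truncS; case: (ltngtP j N) jk => // [jN' _|jN' _]; last subst j.
  have Pj := mono_trunc_le jN' zj; have AN := ler_iXnr zk sN0 sN1.
  have : (1 - s j) * (1 - s N) <= (1 - mono_trunc N z) * (1 - s N ^+ z N).
    by rewrite ler_pM ?subr_ge0 // lerD2l lerN2.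
  lra.
have z2 : 1 <= (z N).-1%:R :> R.
  by rewrite ler1n -ltnS prednK //; move: tk; rewrite /two_kids eqxx.
have : (1 - s N) ^+ 2 <= (z N).-1%:R * (1 - s N) ^+ 2 by rewrite ler_peMl ?sqr_ge0.
rewrite expr2; lra.
Qed.

Lemma defect_trunc_eq0 N z : (forall j k, ~~ two_kids z j k) -> defect_trunc N z = 0.
Proof.
move=> no_two; elim: N => [|N IH]; first exact: defect_trunc0.
have [zN|zN] : z N = 0%N \/ z N = 1%N.
  by have := no_two N N; rewrite /two_kids eqxx; case: (z N) => [|[|]]; auto.
  by rewrite defect_truncS IH zN expr0 mul0r !subrr mulr0 !addr0.
rewrite defect_truncS IH zN; suff -> : mono_trunc N z = 1.
  by rewrite expr1 mul1r !subrr mul0r !addr0.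
rewrite /mono_trunc big1 // => l _; suff -> : z l = 0%N by rewrite expr0.
have := no_two l N; rewrite /two_kids (ltn_eqF (ltn_ord l)) zN andbT.
by case: (z l).
Qed.

End TruncatedProducts.

Definition in_unit_cube {R : realType} (s : nat -> R) := forall j, 0 <= s j <= 1.

(* Only meaningful for finitely supported [z], whose truncations are
   eventually constant. *)
Definition defect {R : realType} (s : nat -> R) z := limn (defect_trunc s ^~ z).

Section FiniteSupport.
Variables (R : realType) (s : nat -> R) (z : nat -> nat) (N : nat).
Hypothesis zN : support_lt z N.

Lemma monoE : mono s z = mono_trunc s N z.
Proof.
rewrite /mono; apply: lim_near_cst; first exact: norm_hausdorff.
exists N => // M /= NM.
rewrite /mono_trunc (big_ord_bounded_support (F := fun j => s j ^+ z j) NM) //.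
by move=> j /zN ->.
Qed.

Lemma defectE : defect s z = defect_trunc s N z.
Proof.
rewrite /defect; apply: lim_near_cst; first exact: norm_hausdorff.
exists N => // M /= NM.
rewrite /defect_trunc /lin_trunc /mono_trunc.
rewrite (big_ord_bounded_support (F := fun j => s j ^+ z j) NM) => [|j /zN ->//].
rewrite (big_ord_bounded_support (F := fun j => (z j)%:R * (1 - s j)) NM) //.
by move=> j /zN ->; rewrite mul0r.
Qed.

Lemma esum_lin_bounded_support (x : nat -> R) : (forall j, 0 <= x j) ->
  (\esum_(j in [set: nat]) ((z j)%:R * x j)%:E = (\sum_(j < N) (z j)%:R * x j)%:E)%E.
Proof.
move=> x0; apply: esum_nat_bounded_support => [j|j /zN ->]; last by rewrite mul0r.
by rewrite mulr_ge0.
Qed.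

End FiniteSupport.

Section GaltonWatson.
Local Open Scope classical_set_scope.
Variables (R : realType) (p : nat -> (nat -> nat) -> R).
Hypothesis p_ge0 : forall i z, 0 <= p i z.
Hypothesis p_fin : forall i z, p i z != 0 -> finite_set [set j | z j != 0%N].
Hypothesis p_sum1 : forall i, (\esum_(z in [set: nat -> nat]) (p i z)%:E = 1)%E.

Lemma p_support i z : p i z != 0 -> exists N, support_lt z N.
Proof. by move/p_fin/finite_support_bound. Qed.

Lemma p_mono01 (s : nat -> R) i z : in_unit_cube s -> 0 <= p i z * mono s z <= p i z.
Proof.
move=> s01; have [->|/p_support[N zN]] := eqVneq (p i z) 0; first by rewrite mul0r lexx.
have /andP[m0 m1] := mono_trunc01 s01 N z.
by rewrite (monoE s zN) mulr_ge0 // ler_piMr.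
Qed.

Lemma p_one_sub_mono_ge0 (s : nat -> R) i z : in_unit_cube s ->
  0 <= p i z * (1 - mono s z).
Proof. by move=> s01; rewrite mulrBr mulr1 subr_ge0; case/andP: (p_mono01 i z s01). Qed.

Lemma FgenE (s : nat -> R) i : in_unit_cube s ->
  (Fgen p s i)%:E = (\esum_(z in [set: nat -> nat]) (p i z * mono s z)%:E)%E.
Proof.
move=> s01; have ge0 : (0 <= \esum_(z in [set: nat -> nat]) (p i z * mono s z)%:E)%E.
  by apply: esum_ge0 => z _; rewrite lee_fin; case/andP: (p_mono01 i z s01).
rewrite /Fgen fineK // ge0_fin_numE // (@le_lt_trans _ _ 1%E) ?ltry // -(p_sum1 i).
by apply: le_esum => z _; rewrite lee_fin; case/andP: (p_mono01 i z s01).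
Qed.

Lemma Fgen_cube (s : nat -> R) : in_unit_cube s -> in_unit_cube (Fgen p s).
Proof.
move=> s01 i; rewrite -!lee_fin FgenE // -(p_sum1 i).
rewrite esum_ge0 => [|z _]; last by rewrite lee_fin; case/andP: (p_mono01 i z s01).
by apply: le_esum => z _; rewrite lee_fin; case/andP: (p_mono01 i z s01).
Qed.

Lemma Fgen_le (s t : nat -> R) i : in_unit_cube s -> in_unit_cube t ->
  (forall j, s j <= t j) -> Fgen p s i <= Fgen p t i.
Proof.
move=> s01 t01 st; rewrite -lee_fin !FgenE //; apply: le_esum => z _.
rewrite lee_fin; have [->|/p_support[N zN]] := eqVneq (p i z) 0; first by rewrite !mul0r.
rewrite (monoE s zN) (monoE t zN) ler_wpM2l // ler_prod // => j _.
have /andP[sj0 _] := s01 j; rewrite exprn_ge0 //= lerXn2r // ?nnegrE //.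
exact: le_trans (st j).
Qed.

Lemma one_sub_FgenE (s : nat -> R) i : in_unit_cube s ->
  ((1 - Fgen p s i)%:E = \esum_(z in [set: nat -> nat]) (p i z * (1 - mono s z))%:E)%E.
Proof.
move=> s01; have := p_sum1 i.
have split z : (p i z)%:E = ((p i z * mono s z)%:E + (p i z * (1 - mono s z))%:E)%E.
  by rewrite -EFinD; congr (_%:E); ring.
rewrite (eq_esum (fun z _ => split z)) esumD -?FgenE // => [sum1|z _|z _].
- by rewrite EFinB -sum1 addeAC subee // add0e.
- by rewrite lee_fin; case/andP: (p_mono01 i z s01).
- by rewrite lee_fin p_one_sub_mono_ge0.
Qed.

Lemma Mmean_ge0 i j : (0 <= Mmean p i j)%E.
Proof. by apply: esum_ge0 => z _; rewrite mule_ge0 // lee_fin. Qed.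

Lemma esum_Mmean_mul (x : nat -> R) i : (forall j, 0 <= x j) ->
  (\esum_(j in [set: nat]) (Mmean p i j * (x j)%:E) =
   \esum_(z in [set: nat -> nat])
     ((p i z)%:E * \esum_(j in [set: nat]) ((z j)%:R * x j)%:E))%E.
Proof.
move=> x0.
transitivity (\esum_(j in [set: nat]) \esum_(z in [set: nat -> nat])
                 ((p i z)%:E * ((z j)%:R * x j)%:E))%E.
  apply: eq_esum => j _; rewrite /Mmean -esumZr // => [|z]; last first.
    by rewrite mule_ge0 // lee_fin.
  by apply: eq_esum => z _; rewrite EFinM muleA.
rewrite esum_interchange => [|j z]; last by rewrite mule_ge0 // lee_fin ?mulr_ge0.
by apply: eq_esum => z _; rewrite esumZl // => j; rewrite lee_fin mulr_ge0.
Qed.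

Lemma p_defect_ge0 (s : nat -> R) i z : in_unit_cube s -> 0 <= p i z * defect s z.
Proof.
move=> s01; have [->|/p_support[N zN]] := eqVneq (p i z) 0; first by rewrite mul0r.
by rewrite (defectE s zN) mulr_ge0 // defect_trunc_ge0.
Qed.

Lemma esum_Mmean_one_sub (s : nat -> R) i : in_unit_cube s ->
  (\esum_(j in [set: nat]) (Mmean p i j * (1 - s j)%:E) =
   (1 - Fgen p s i)%:E + \esum_(z in [set: nat -> nat]) (p i z * defect s z)%:E)%E.
Proof.
move=> s01; have s1 j : 0 <= 1 - s j by rewrite subr_ge0; case/andP: (s01 j).
rewrite esum_Mmean_mul // one_sub_FgenE // -esumD => [|z _|z _]; first last.
- by rewrite lee_fin p_defect_ge0.
- by rewrite lee_fin p_one_sub_mono_ge0.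
apply: eq_esum => z _; have [->|/p_support[N zN]] := eqVneq (p i z) 0.
  by rewrite !mul0r mul0e adde0.
rewrite (esum_lin_bounded_support zN) // (monoE s zN) (defectE s zN) -EFinM -EFinD.
by rewrite /defect_trunc /lin_trunc; congr (_%:E); ring.
Qed.

Lemma one_sub_Fgen_le (s : nat -> R) i : in_unit_cube s ->
  ((1 - Fgen p s i)%:E <= \esum_(j in [set: nat]) (Mmean p i j * (1 - s j)%:E))%E.
Proof.
move=> s01; rewrite esum_Mmean_one_sub // leeDl // esum_ge0 // => z _.
by rewrite lee_fin p_defect_ge0.
Qed.

Lemma p_defect_two_kids (s : nat -> R) i z j k : in_unit_cube s -> p i z != 0 ->
  two_kids z j k -> p i z * ((1 - s j) * (1 - s k)) <= p i z * defect s z.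
Proof.
move=> s01 /p_support[N zN] tk; have [zj zk] := two_kids_gt0 tk.
rewrite (defectE s zN) ler_wpM2l // defect_trunc_two_kids //; exact: support_lt_gt0 zN _.
Qed.

Lemma one_sub_Fgen_one_kid (s : nat -> R) i : in_unit_cube s ->
  (forall z, p i z != 0 -> forall j k, ~~ two_kids z j k) ->
  ((1 - Fgen p s i)%:E = \esum_(j in [set: nat]) (Mmean p i j * (1 - s j)%:E))%E.
Proof.
move=> s01 no_two; rewrite esum_Mmean_one_sub // esum1 ?adde0 // => z _.
have [->|pz] := eqVneq (p i z) 0; first by rewrite mul0r.
have [N zN] := p_support pz.
by rewrite (defectE s zN) defect_trunc_eq0 ?mulr0 //; exact: no_two.
Qed.

Lemma one_sub_Fgen_ge (s : nat -> R) i z m : in_unit_cube s -> p i z != 0 ->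
  (0 < z m)%N -> p i z * (1 - s m) <= 1 - Fgen p s i.
Proof.
move=> s01 pz zm; have [N zN] := p_support pz.
have nonneg y : [set: nat -> nat] y -> (0 <= (p i y * (1 - mono s y))%:E)%E.
  by rewrite lee_fin p_one_sub_mono_ge0.
rewrite -lee_fin one_sub_FgenE //; apply: le_trans (le_term_esum (t := z) I nonneg).
rewrite lee_fin ler_wpM2l // lerB // (monoE s zN).
exact: mono_trunc_le (support_lt_gt0 zN zm) zm.
Qed.

Definition surv n j := 1 - Fiter p n (fun=> 0) j.

Lemma zero_cube : in_unit_cube (fun=> 0 : R).
Proof. by move=> j; rewrite lexx ler01. Qed.

Lemma Fiter_cube n s : in_unit_cube s -> in_unit_cube (Fiter p n s).
Proof. by move=> s01; elim: n => // n IH; exact: Fgen_cube. Qed.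

Lemma Fiter_le n (s t : nat -> R) : in_unit_cube s -> in_unit_cube t ->
  (forall j, s j <= t j) -> forall j, Fiter p n s j <= Fiter p n t j.
Proof.
by move=> s01 t01 st; elim: n => // n IH j; apply: Fgen_le => //; exact: Fiter_cube.
Qed.

Lemma surv01 n j : 0 <= surv n j <= 1.
Proof.
have /andP[F0 F1] := Fiter_cube n zero_cube j.
by rewrite /surv subr_ge0 F1 lerBlDr lerDl.
Qed.

Lemma surv_le_succ n j : surv n.+1 j <= surv n j.
Proof.
rewrite /surv lerB // /Fiter iterSr; apply: Fiter_le => [||l]; first exact: zero_cube.
  exact: Fgen_cube zero_cube.
by case/andP: (Fgen_cube zero_cube l).
Qed.

Lemma surv_nonincr m n j : (m <= n)%N -> surv n j <= surv m j.
Proof.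
move=> mn; apply: (@homo_leq _ (surv^~ j) (fun x y => y <= x) lexx _ _ m n mn).
  by move=> y x w yx wy; exact: le_trans wy yx.
by move=> k; exact: surv_le_succ.
Qed.

Lemma one_sub_Fiter_le_surv n (s : nat -> R) j : in_unit_cube s ->
  1 - Fiter p n s j <= surv n j.
Proof.
move=> s01; rewrite lerB // Fiter_le //; first exact: zero_cube.
by move=> l; case/andP: (s01 l).
Qed.

Lemma surv_step n i :
  ((surv n.+1 i)%:E <= \esum_(j in [set: nat]) (Mmean p i j * (surv n j)%:E))%E.
Proof. exact: one_sub_Fgen_le (Fiter_cube n zero_cube). Qed.

Definition dies_out l := forall d, 0 < d -> exists n, surv n l < d.

Lemma dies_out_child l m : dies_out l -> (0 < Mmean p l m)%E -> dies_out m.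
Proof.
move=> dl /esum_gt0_witness[z _]; rewrite mule_eq0 negb_or !eqe pnatr_eq0 -lt0n.
case/andP=> pz zm d d0; have pz0 : 0 < p l z by rewrite lt_def pz p_ge0.
have [n sn] := dl _ (mulr_gt0 d0 pz0); exists n.
have := one_sub_Fgen_ge (Fiter_cube n zero_cube) pz zm.
rewrite -/(surv n.+1 l) -/(surv n m) => le_surv.
have := le_lt_trans le_surv (le_lt_trans (surv_nonincr l (leqnSn n)) sn).
by rewrite mulrC ltr_pM2r.
Qed.

Lemma Mpow_ge0 n i j : (0 <= Mpow p n i j)%E.
Proof.
elim: n j => [|n IH] j /=; first by rewrite lee_fin ler0n.
by apply: esum_ge0 => k _; rewrite mule_ge0 // Mmean_ge0.
Qed.

Lemma dies_out_reach l n m : dies_out l -> (0 < Mpow p n l m)%E -> dies_out m.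
Proof.
elim: n m => [|n IH] m dl /=; first by rewrite lte_fin ltr0n lt0b => /eqP <-.
case/esum_gt0_witness=> k _; rewrite mule_eq0 negb_or => /andP[lk km].
apply: (dies_out_child (IH k dl _)); first by rewrite lt_def lk Mpow_ge0.
by rewrite lt_def km Mmean_ge0.
Qed.

Lemma Mrow_ge0 i : (0 <= Mrow p i)%E.
Proof. by apply: esum_ge0 => j _; exact: Mmean_ge0. Qed.

Section LeftEigenvector.
Variable v : nat -> R.
Hypothesis v_gt0 : forall j, 0 < v j.
Hypothesis vM : forall j,
  (\esum_(i in [set: nat]) (v i)%:E * Mmean p i j)%E = (v j)%:E.
Hypothesis v_sum1 : (\esum_(j in [set: nat]) (v j)%:E = 1)%E.

Let v_ge0 j : 0 <= v j := ltW (v_gt0 j).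

Lemma esum_vM (x : nat -> R) : (forall j, 0 <= x j) ->
  (\esum_(i in [set: nat]) ((v i)%:E * \esum_(j in [set: nat]) (Mmean p i j * (x j)%:E)) =
   \esum_(j in [set: nat]) (v j * x j)%:E)%E.
Proof.
move=> x0.
transitivity (\esum_(i in [set: nat]) \esum_(j in [set: nat])
     ((v i)%:E * (Mmean p i j * (x j)%:E)))%E.
  by apply: eq_esum => i _; rewrite esumZl // => j; rewrite mule_ge0 ?Mmean_ge0 ?lee_fin.
rewrite esum_interchange => [|i j]; last by rewrite !mule_ge0 ?Mmean_ge0 ?lee_fin.
apply: eq_esum => j _; rewrite EFinM -vM -esumZr // => [|i]; last first.
  by rewrite mule_ge0 ?Mmean_ge0 ?lee_fin.
by apply: eq_esum => i _; rewrite muleA.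
Qed.

Lemma esum_v_fin_num (x : nat -> R) : (forall j, 0 <= x j <= 1) ->
  (\esum_(j in [set: nat]) (v j * x j)%:E)%E \is a fin_num.
Proof.
move=> x01; rewrite ge0_fin_numE; last first.
  by apply: esum_ge0 => j _; rewrite lee_fin mulr_ge0 //; case/andP: (x01 j).
apply: (@le_lt_trans _ _ 1%E); last exact: ltry.
rewrite -v_sum1; apply: le_esum => j _; rewrite lee_fin ler_piMr //.
by case/andP: (x01 j).
Qed.

Definition wsurv n := fine (\esum_(l in [set: nat]) (v l * surv n l)%:E)%E.

Lemma wsurvE n : (\esum_(l in [set: nat]) (v l * surv n l)%:E)%E = (wsurv n)%:E.
Proof. by rewrite fineK // esum_v_fin_num // => l; exact: surv01. Qed.

Lemma wsurv_ge0 n : 0 <= wsurv n.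
Proof.
rewrite -lee_fin -wsurvE esum_ge0 // => l _.
by rewrite lee_fin mulr_ge0 //; case/andP: (surv01 n l).
Qed.

(* Pairing [surv_step] with [v] loses exactly the [v]-weighted defects, and a
   type-[i0] offspring vector with children of types [j] and [k] has defect at
   least [surv n j * surv n k]. *)
Lemma wsurv_step n i0 z0 j k : p i0 z0 != 0 -> two_kids z0 j k ->
  wsurv n.+1 + v i0 * p i0 z0 * (surv n j * surv n k) <= wsurv n.
Proof.
move=> pz tk; set s := Fiter p n (fun=> 0).
have s01 : in_unit_cube s := Fiter_cube n zero_cube.
have v0 i : (0 <= (v i)%:E)%E by rewrite lee_fin.
have G0 i : (0 <= \esum_(z in [set: nat -> nat]) (p i z * defect s z)%:E)%E.
  by apply: esum_ge0 => z _; rewrite lee_fin p_defect_ge0.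
have F0 i : (0 <= (1 - Fgen p s i)%:E)%E by rewrite lee_fin; case/andP: (surv01 n.+1 i).
rewrite -lee_fin EFinD -!wsurvE -(esum_vM (x := surv n)) => [|l]; last first.
  by case/andP: (surv01 n l).
rewrite (eq_esum (fun i _ => congr1 (fun x => (v i)%:E * x)%E (esum_Mmean_one_sub i s01))).
rewrite (eq_esum (fun i _ => ge0_muleDr _ (F0 i) (G0 i))) esumD => [|i _|i _]; last 2 first.
- exact: mule_ge0.
- exact: mule_ge0.
apply: leeD; first by apply: le_esum => i _; rewrite EFinM.
apply: le_trans (le_term_esum (t := i0) I (fun i _ => mule_ge0 (v0 i) (G0 i))).
rewrite -mulrA EFinM lee_wpmul2l //.
have pd0 z : [set: nat -> nat] z -> (0 <= (p i0 z * defect s z)%:E)%E.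
  by rewrite lee_fin p_defect_ge0.
apply: le_trans (le_term_esum (t := z0) I pd0).
by rewrite lee_fin; exact: p_defect_two_kids.
Qed.

Lemma dies_out_two_kids i0 z0 j k : p i0 z0 != 0 -> two_kids z0 j k ->
  dies_out j \/ dies_out k.
Proof.
move=> pz tk; have [dj|ndj] := boolp.pselect (dies_out j); [by left|right].
have [d d0 surv_ge] : exists2 d, 0 < d & forall n, d <= surv n j.
  apply: contrapT => no_d; apply: ndj => d d0; apply: contrapT => no_n.
  apply: no_d; exists d => // n; rewrite leNgt; apply/negP => lt_d.
  by apply: no_n; exists n.
set C := v i0 * p i0 z0; have C0 : 0 < C by rewrite mulr_gt0 // lt_def pz p_ge0.
have surv0 m l : 0 <= surv m l by case/andP: (surv01 m l).
apply: (@small_factor_of_linear_bound _ (fun n => C * surv n j) _ (wsurv 0) (C * d)).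
- exact: mulr_gt0.
- by move=> n; rewrite ler_wpM2l // ltW.
- by [].
move=> N; rewrite -mulrA.
apply: (telescoping_bound (a := wsurv) (b := fun n => C * (surv n j * surv n k))).
- exact: wsurv_ge0.
- by move=> n; exact: wsurv_step.
- move=> m n mn; apply: ler_wpM2l; first exact: ltW.
  by apply: ler_pM; rewrite ?surv0 ?surv_nonincr.
Qed.

Lemma Mrow_eq1 : (forall i, (Mrow p i <= 1)%E) -> forall i, Mrow p i = 1%E.
Proof.
move=> Mrow_le1; pose m l := fine (Mrow p l).
have mE l : Mrow p l = (m l)%:E.
  by rewrite fineK // ge0_fin_numE ?Mrow_ge0 // (le_lt_trans (Mrow_le1 l)) ?ltry.
have m01 l : 0 <= m l <= 1 by rewrite -!lee_fin -mE Mrow_ge0 Mrow_le1.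
have vm1 : (\esum_(l in [set: nat]) (v l * m l)%:E = 1)%E.
  have := esum_vM (x := fun=> 1) (fun=> ler01); rewrite /= => vM1.
  transitivity (\esum_(j in [set: nat]) (v j * 1)%:E)%E; last first.
    by rewrite -v_sum1; apply: eq_esum => j _; rewrite mulr1.
  rewrite -vM1; apply: eq_esum => l _; rewrite EFinM -mE /Mrow; congr (_ * _)%E.
  by apply: eq_esum => j _; rewrite mule1.
have gap_ge0 l : [set: nat] l -> (0 <= (v l * (1 - m l))%:E)%E.
  by rewrite lee_fin mulr_ge0 // subr_ge0; case/andP: (m01 l).
have gap0 : (\esum_(l in [set: nat]) (v l * (1 - m l))%:E = 0)%E.
  have split l : (v l)%:E = ((v l * m l)%:E + (v l * (1 - m l))%:E)%E.
    by rewrite -EFinD; congr (_%:E); ring.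
  have := v_sum1; rewrite (eq_esum (fun l _ => split l)) esumD ?vm1 => [sum1|l _|//].
  - by have := congr1 (fun y => y - 1)%E sum1; rewrite addeAC !subee // add0e.
  - by rewrite lee_fin mulr_ge0 //; case/andP: (m01 l).
move=> i; have := le_term_esum (t := i) I gap_ge0.
rewrite gap0 lee_fin pmulr_rle0 // subr_le0 => m_ge1.
rewrite mE; congr (_%:E); apply/eqP.
by rewrite eq_le m_ge1 andbT; case/andP: (m01 i).
Qed.

Lemma F_linear_of_one_kid :
  (forall i z, p i z != 0 -> forall j k, ~~ two_kids z j k) -> F_linear p.
Proof.
move=> no_two; have Mrow1 : forall i, Mrow p i = 1%E.
  apply: Mrow_eq1 => i; have /andP[F0 _] := Fgen_cube zero_cube i.
  have := one_sub_Fgen_one_kid zero_cube (no_two i).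
  rewrite (eq_esum (fun j _ => _ : _ = Mmean p i j)) => [E|j _]; last first.
    by rewrite subr0 mule1.
  by rewrite /Mrow -E lee_fin gerBl.
move=> s s01 i; have s0 j : (0 <= (s j)%:E)%E by rewrite lee_fin; case/andP: (s01 j).
have s1 j : (0 <= (1 - s j)%:E)%E by rewrite lee_fin subr_ge0; case/andP: (s01 j).
have : (\esum_(j in [set: nat]) (Mmean p i j * (1 - s j)%:E) +
        \esum_(j in [set: nat]) (Mmean p i j * (s j)%:E) = 1)%E.
  rewrite -esumD => [|j _|j _]; rewrite ?mule_ge0 ?Mmean_ge0 //.
  rewrite -(Mrow1 i); apply: eq_esum => j _.
  by rewrite -ge0_muleDr // -EFinD subrK mule1.
rewrite -(one_sub_Fgen_one_kid s01 (no_two i)) => sum1.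
have := congr1 (fun y => y - (1 - Fgen p s i)%:E)%E sum1.
by rewrite addeAC subee // add0e => ->; rewrite -EFinB; congr (_%:E); ring.
Qed.

Lemma exists_dies_out : ~ F_linear p -> exists l, dies_out l.
Proof.
move=> nonlinear.
have [[i [z [j [k [pz tk]]]]]|no_two] :=
  boolp.pselect (exists i z j k, p i z != 0 /\ two_kids z j k).
  by case: (dies_out_two_kids pz tk) => ?; [exists j | exists k].
exfalso; apply/nonlinear/F_linear_of_one_kid => i z pz j k; apply/negP => tk.
by apply: no_two; exists i, z, j, k.
Qed.

Section RightEigenvector.
Hypothesis nonlinear : ~ F_linear p.
Hypothesis irr : irreducible p.
Hypothesis Mrow_fin : forall i, (Mrow p i < +oo)%E.
Variables (u : nat -> R) (B : R).
Hypothesis u_gt0 : forall i, 0 < u i.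
Hypothesis Mu : forall i,
  (\esum_(j in [set: nat]) Mmean p i j * (u j)%:E)%E = (u i)%:E.
Hypothesis u_le : forall i, u i <= B.
Hypothesis Mrow_tail : forall eps : R, 0 < eps -> exists N0 : nat, forall N, (N0 <= N)%N ->
  forall i, (\esum_(j in [set j | (N < j)%N]) Mmean p i j <= eps%:E * Mrow p i)%E.

Lemma dies_out_all j : dies_out j.
Proof.
have [l dl] := exists_dies_out nonlinear; have [n [_ ln]] := irr l j.
exact: dies_out_reach dl ln.
Qed.

Lemma surv_small_prefix N0 d : 0 < d -> exists n0, forall n, (n0 <= n)%N ->
  forall j, (j <= N0)%N -> surv n j < d.
Proof.
move=> d0; elim: N0 => [|N [n1 small]].
  have [n0 dn0] := dies_out_all 0 d0; exists n0 => n n0n j; rewrite leqn0 => /eqP ->.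
  exact: le_lt_trans (surv_nonincr 0 n0n) dn0.
have [n2 dn2] := dies_out_all N.+1 d0; exists (maxn n1 n2) => n.
rewrite geq_max => /andP[n1n n2n] j.
rewrite leq_eqVlt ltnS => /orP[/eqP ->|/small]; last exact.
exact: le_lt_trans (surv_nonincr _ n2n) dn2.
Qed.

Lemma Mrow_bounded : exists2 C, 0 < C & forall i, (Mrow p i <= C%:E)%E.
Proof.
have half0 : (0 : R) < 2^-1 by rewrite invr_gt0.
have [N tail] := Mrow_tail half0; have [mu mu0 mu_le] := prefix_min_gt0 N u_gt0.
have B0 : 0 < B := lt_le_trans (u_gt0 0) (u_le 0).
exists (2 * B / mu); first by rewrite divr_gt0 ?mulr_gt0.
move=> i; set T := [set j | (N < j)%N].
have head : ((\esum_(j in ~` T) Mmean p i j) * mu%:E <= (u i)%:E)%E.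
  rewrite -esumZr; [|exact: ltW|exact: Mmean_ge0].
  rewrite -Mu; apply: (@le_trans _ _ (\esum_(j in ~` T) Mmean p i j * (u j)%:E)%E).
    apply: le_esum => j Tj; rewrite lee_wpmul2l ?Mmean_ge0 // lee_fin mu_le //.
    by rewrite leqNgt; apply/negP.
  exact: le_esum_subset.
have split : Mrow p i = (\esum_(j in T) Mmean p i j + \esum_(j in ~` T) Mmean p i j)%E.
  by rewrite /Mrow (esumID T) ?setTI // => j _; exact: Mmean_ge0.
have [Y0 X0] : (0 <= \esum_(j in T) Mmean p i j)%E /\
                (0 <= \esum_(j in ~` T) Mmean p i j)%E.
  by split; apply: esum_ge0 => j _; exact: Mmean_ge0.
have Mf : Mrow p i \is a fin_num by rewrite ge0_fin_numE ?Mrow_ge0.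
have Xf : (\esum_(j in ~` T) Mmean p i j)%E \is a fin_num.
  by rewrite ge0_fin_numE // (le_lt_trans _ (Mrow_fin i)) // split leeDr.
have Yf : (\esum_(j in T) Mmean p i j)%E \is a fin_num.
  by rewrite ge0_fin_numE // (le_lt_trans _ (Mrow_fin i)) // split leeDl.
(* The tail is at most half of the row sum, and mu times the head is at most
   u i <= B. *)
have := tail N (leqnn N) i; have := u_le i.
rewrite -(fineK Mf) -(fineK Xf) -(fineK Yf) in split head X0 Y0 *.
rewrite -EFinM lee_fin in head; rewrite -EFinD in split; case: split => split.
rewrite -EFinM !lee_fin ler_pdivlMr // in X0 Y0 * => uB tail_i.
nra.
Qed.

Lemma surv_succ_le m i N d : 0 <= d -> (forall j, (j <= N)%N -> surv m j <= d) ->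
  ((surv m.+1 i)%:E <=
     d%:E * Mrow p i + \esum_(j in [set j | (N < j)%N]) Mmean p i j)%E.
Proof.
move=> d0 head; apply: le_trans (surv_step m i) _; set T := [set j | (N < j)%N].
have surv0 j : (0 <= (surv m j)%:E)%E by rewrite lee_fin; case/andP: (surv01 m j).
rewrite (esumID T) ?setTI => [|j _]; last by rewrite mule_ge0 ?Mmean_ge0.
rewrite addeC; apply: leeD.
  apply: (@le_trans _ _ (\esum_(j in ~` T) Mmean p i j * d%:E)%E).
    apply: le_esum => j Tj; rewrite lee_wpmul2l ?Mmean_ge0 // lee_fin head //.
    by rewrite leqNgt; apply/negP.
  rewrite esumZr // => [|j]; last exact: Mmean_ge0.
  by rewrite muleC; apply: lee_wpmul2l; [rewrite lee_fin | exact: le_esum_subset].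
apply: le_esum => j _; rewrite -[leRHS]mule1; apply: lee_wpmul2l; first exact: Mmean_ge0.
by rewrite lee_fin; case/andP: (surv01 m j).
Qed.

Lemma surv_uniform eps : 0 < eps ->
  exists N, forall n, (N <= n)%N -> forall i, surv n i < eps.
Proof.
move=> eps0; have [C C0 Mrow_le] := Mrow_bounded.
pose e := eps / (4 * C); have e0 : 0 < e by rewrite divr_gt0 ?mulr_gt0.
have [N tail] := Mrow_tail e0; have [n0 head] := surv_small_prefix N e0.
exists n0.+1 => -[//|m]; rewrite ltnS => n0m i.
have eC : (e%:E * Mrow p i <= (e * C)%:E)%E.
  by rewrite EFinM; apply: (lee_wpmul2l _ (Mrow_le i)); rewrite lee_fin ltW.
have : ((surv m.+1 i)%:E <= (e * C + e * C)%:E)%E.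
  rewrite EFinD.
  apply: le_trans (surv_succ_le i (ltW e0) (fun j jN => ltW (head m n0m j jN))) _.
  exact: leeD eC (le_trans (tail N (leqnn N) i) eC).
rewrite lee_fin => /le_lt_trans; apply.
have -> : e * C = eps / 4 by rewrite /e invfM mulrA mulrAC -mulrA mulfV ?mulr1 ?gt_eqF.
lra.
Qed.

End RightEigenvector.
End LeftEigenvector.
End GaltonWatson.

Theorem lemma4 (R : realType) (p : nat -> (nat -> nat) -> R) :
  offspring_law p -> class_M1 p -> ~ F_linear p ->
  forall eps : R, 0 < eps -> exists N : nat, forall n : nat, (N <= n)%N ->
    forall (i : nat) (s : nat -> R), (forall j, 0 < s j <= 1) ->
      `|1 - Fiter p n s i| < eps.
Proof.
move=> [p_ge0 p_fin p_sum1] [Mrow_fin [[irr _ _ _ _]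
  [[v [u [v_gt0 u_gt0 vM Mu [_ v_sum1 [B u_le]]]]] [tail _]]]] nonlinear eps eps0.
have [N surv_small] := surv_uniform p_ge0 p_fin p_sum1 v_gt0 vM v_sum1 nonlinear irr
  Mrow_fin u_gt0 Mu u_le tail eps0.
exists N => n Nn i s s01.
have s_cube : in_unit_cube s by move=> j; case/andP: (s01 j) => /ltW -> ->.
have /andP[_ F_le1] := Fiter_cube p_ge0 p_fin p_sum1 n s_cube i.
rewrite ger0_norm ?subr_ge0 //.
exact: le_lt_trans (one_sub_Fiter_le_surv p_ge0 p_fin p_sum1 n i s_cube)
  (surv_small n Nn i).
Qed.
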